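(* Let $g$ be a balanced $l$-variable Boolean function such that there exists $\bm{\beta}\in\mathbb{F}_2^l$ with $\mathrm{wt}(\bm{\beta})=1$ and $W_g^2(\bm{\beta})=\max_{\mathbf{v}\in\mathbb{F}_2^l}W_g^2(\mathbf{v})$. Define $f_0=g$ and $f_m=g\diamond f_{m-1}$ for $m\ge1$ (so $f_m$ is an $l^{m+1}$-variable Boolean function). Then for all $m\ge0$, $$H_\infty(f_m)=(m+1)\,H_\infty(g)\quad\text{and}\quad \frac{H_\infty(f_m)}{\mathrm{Inf}(f_m)}=\frac{H_\infty(g)}{\mathrm{Inf}(g)}\cdot\frac{m+1}{\mathrm{Inf}(g)^m}.$$
   Context: Boolean functions are maps $\mathbb{F}_2^n\to\mathbb{F}_2$; balanced means taking value $1$ on exactly half the inputs. Walsh transform: $W_f(\bm{\alpha})=2^{-n}\sum_{\mathbf{x}}(-1)^{f(\mathbf{x})\oplus\langle\mathbf{x},\bm{\alpha}\rangle}$. Logarithms are base 2. Min-entropy: $H_\infty(f)=\min_{\bm{\alpha}:W_f^2(\bm{\alpha})\ne0}\log(1/W_f^2(\bm{\alpha}))$. Influence: $\mathrm{Inf}(f)=\sum_{i=1}^n\Pr_{\mathbf{x}\in\mathbb{F}_2^n}[f(\mathbf{x})\ne f(\mathbf{x}\oplus\mathbf{e}_i)]$, where $\mathbf{e}_i$ is the $i$-th unit vector (equivalently $\mathrm{Inf}(f)=\sum_{\bm{\alpha}}\mathrm{wt}(\bm{\alpha})W_f^2(\bm{\alpha})$). Disjoint composition: for $f$ on $k$ variables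 and $h$ on $l$ variables, $(f\diamond h)(\mathbf{x})=f(h(\mathbf{x}^{(1)}),\ldots,h(\mathbf{x}^{(k)}))$ with $\mathbf{x}^{(i)}=(x_{(i-1)l+1},\ldots,x_{il})$. *)

From HB Require Import structures.
From mathcomp Require Import all_boot all_order all_algebra.
From mathcomp Require Import all_classical all_reals all_analysis.
Set Implicit Arguments. Unset Strict Implicit. Unset Printing Implicit Defensive.
Import Order.TTheory GRing.Theory Num.Theory.
Local Open Scope ring_scope.

Definition bvec (n : nat) := {ffun 'I_n -> bool}.
Definition bfun (n : nat) := bvec n -> bool.

Definition wt n (a : bvec n) : nat := #|[pred i | a i]|.

Definition dotb n (x a : bvec n) : bool := \big[addb/false]_(i < n) (x i && a i).

Definition balanced n (f : bfun n) : Prop := (2 * #|[pred x | f x]| = 2 ^ n)%N.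

Definition walsh (R : realType) n (f : bfun n) (a : bvec n) : R :=
  (2%:R ^- n) * \sum_(x : bvec n) (-1) ^+ (f x (+) dotb x a).

Definition log2 (R : realType) (x : R) : R := ln x / ln 2.

Definition Hinf (R : realType) n (f : bfun n) : R :=
  fine (\big[Order.min/+oo%E]_(a : bvec n | walsh R f a ^+ 2 != 0)
          (log2 (1 / walsh R f a ^+ 2))%:E).

Definition flip n (x : bvec n) (i : 'I_n) : bvec n :=
  [ffun j => if j == i then ~~ x j else x j].

Definition Inf (R : realType) n (f : bfun n) : R :=
  \sum_(i < n) (#|[pred x : bvec n | f x != f (flip x i)]|%:R / (2 ^ n)%:R).

Lemma blk_lt k l (i : 'I_k) (j : 'I_l) : (i * l + j < k * l)%N.
Proof.
case: i j => i Hi [j Hj] /=.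
apply: (@leq_trans (i * l + l)); first by rewrite ltn_add2l.
by rewrite -mulSnr leq_mul2r Hi orbT.
Qed.

Definition blk k l (i : 'I_k) (j : 'I_l) : 'I_(k * l) := Ordinal (blk_lt i j).

(* x^(i) = (x_{(i-1)l+1}, ..., x_{il}) (0-based: block i). *)
Definition block k l (x : bvec (k * l)) (i : 'I_k) : bvec l :=
  [ffun j => x (blk i j)].

Definition dcomp k l (f : bfun k) (h : bfun l) : bfun (k * l) :=
  fun x => f [ffun i => h (block x i)].

Fixpoint nv (l m : nat) : nat := if m is m'.+1 then (l * nv l m')%N else l.

Lemma nvE l m : nv l m = (l ^ m.+1)%N.
Proof. elim: m => [|m IH] /=; first by rewrite expn1. by rewrite IH [in RHS]expnS. Qed.

Fixpoint fiter l (g : bfun l) (m : nat) : bfun (nv l m) :=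
  match m return bfun (nv l m) with
  | 0 => g
  | m'.+1 => @dcomp l (nv l m') g (@fiter l g m')
  end.
Arguments fiter {l} g m.
Arguments dcomp {k l} f h.

From Pilot Require Import Defs.
From HB Require Import structures.
From mathcomp Require Import all_boot all_order all_algebra.
From mathcomp Require Import all_classical all_reals all_analysis.
From mathcomp Require Import ring lra.
Import Order.TTheory GRing.Theory Num.Theory.
Local Open Scope ring_scope.

Set Implicit Arguments. Unset Strict Implicit. Unset Printing Implicit Defensive.

(* For h balanced, the Walsh spectrum of the disjoint composition f <> h
   factors blockwise:  W_{f<>h}(a) = W_f(s) * prod_i c_h(a^(i)), where
   s_i = [a^(i) != 0] and c_h(b) ([wcoef]) is W_h(b) for b != 0 and 1 for
   b = 0 ([walsh_dcomp]).  Hence f <> h is again balanced, and if max W_f^2 is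
   attained at a vector of weight one, then max W_{f<>h}^2 is the product of
   the two maxima ([dcomp_walsh_max]).  Similarly, flipping variable j of
   block i changes f <> h iff it changes h on that block and flipping y_i
   changes f; as h is balanced, the influence of that variable is the product
   of the influences of i in f and j in h, so Inf(f <> h) = Inf f * Inf h
   ([Inf_dcomp]).  By induction f_m is balanced, max W_{f_m}^2 = (max W_g^2)^(m+1)
   and Inf(f_m) = Inf(g)^(m+1).  Since H_oo(f) = log(1 / max W_f^2)
   ([Hinf_max]), the theorem follows. *)

Lemma unpair_lt1 k l (p : 'I_(k * l)) : (p %/ l < k)%N.
Proof.
case: p => p; case: l => [|l]; first by rewrite muln0.
by move=> ?; rewrite /= ltn_divLR.
Qed.

Lemma unpair_lt2 k l (p : 'I_(k * l)) : (p %% l < l)%N.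
Proof.
case: p => p; case: l => [|l]; first by rewrite muln0.
by move=> ?; rewrite /= ltn_pmod.
Qed.

Definition unpair k l (p : 'I_(k * l)) : 'I_k * 'I_l :=
  (Ordinal (unpair_lt1 p), Ordinal (unpair_lt2 p)).

Lemma unpair_blk k l (i : 'I_k) (j : 'I_l) : unpair (blk i j) = (i, j).
Proof.
have l0 : (0 < l)%N by apply: leq_ltn_trans (ltn_ord j).
congr pair; apply: val_inj => /=.
  by rewrite divnMDl // divn_small // addn0.
by rewrite modnMDl modn_small.
Qed.

Lemma blk_unpair k l (p : 'I_(k * l)) : blk (unpair p).1 (unpair p).2 = p.
Proof. by apply: val_inj; rewrite /= -divn_eq. Qed.

Lemma blk_bij k l : bijective (fun q : 'I_k * 'I_l => blk q.1 q.2).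
Proof.
by exists (@unpair k l) => [[i j]|p]; rewrite ?unpair_blk ?blk_unpair.
Qed.

Lemma blk_inj k l : injective (fun q : 'I_k * 'I_l => blk q.1 q.2).
Proof. exact/bij_inj/blk_bij. Qed.

Definition unblock k l (X : {ffun 'I_k -> bvec l}) : bvec (k * l) :=
  [ffun p => X (unpair p).1 (unpair p).2].

Lemma block_unblock k l X i : block (@unblock k l X) i = X i.
Proof. by apply/ffunP => j; rewrite !ffunE unpair_blk. Qed.

Lemma unblock_bij k l : bijective (@unblock k l).
Proof.
exists (fun x => [ffun i => block x i]) => [X|x].
  by apply/ffunP => i; rewrite ffunE block_unblock.
by apply/ffunP => p; rewrite !ffunE blk_unpair.
Qed.

Lemma block_flip k l (x : bvec (k * l)) i j i' :
  block (flip x (blk i j)) i' = if i' == i then flip (block x i) j else block x i'.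
Proof.
apply/ffunP => j'; rewrite !ffunE.
have -> : (blk i' j' == blk i j) = (i' == i) && (j' == j).
  apply/eqP/andP => [E|[/eqP -> /eqP ->] //].
  by have /= [-> ->] := @blk_inj k l (i', j') (i, j) E.
by case: eqP => [->|] /=; rewrite !ffunE.
Qed.

Lemma flipK n (x : bvec n) i : flip (flip x i) i = x.
Proof. by apply/ffunP => j; rewrite !ffunE; case: eqP => // _; rewrite negbK. Qed.

Lemma flip_inj n i : injective (fun x : bvec n => flip x i).
Proof. by move=> x y E; rewrite -(flipK x i) E flipK. Qed.

Definition bzero n : bvec n := [ffun => false].

Lemma bzeroPn n (a : bvec n) : a != bzero n -> exists i, a i.
Proof.
move=> an0; case: (boolP [exists i, a i]) => [/existsP //|/existsPn H].
by move/eqP: an0; case; apply/ffunP => i; rewrite ffunE; apply/negbTE/H.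
Qed.

Lemma card_bvec n : #|{: bvec n}| = (2 ^ n)%N.
Proof. by rewrite card_ffun card_bool card_ord. Qed.

Lemma dotb0 n (x : bvec n) : dotb x (bzero n) = false.
Proof. by rewrite /dotb big1 // => i _; rewrite ffunE andbF. Qed.

Lemma dotb_block k l (x a : bvec (k * l)) :
  dotb x a = \big[addb/false]_(i < k) dotb (block x i) (block a i).
Proof.
rewrite /dotb (reindex _ (onW_bij _ (blk_bij k l))) /=.
rewrite -(pair_big xpredT xpredT (fun i j => x (blk i j) && a (blk i j))) /=.
by apply: eq_bigr => i _; apply: eq_bigr => j _; rewrite !ffunE.
Qed.

Section Characters.
Variable R : comNzRingType.

Lemma sign_xor I (r : seq I) (P : pred I) (F : I -> bool) :
  (-1) ^+ (\big[addb/false]_(i <- r | P i) F i) =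
  \prod_(i <- r | P i) ((-1) ^+ F i : R).
Proof. by apply: (big_morph (fun b : bool => (-1) ^+ b : R)) => // x y; rewrite signr_addb. Qed.

Lemma card_sumR (T : finType) (P : pred T) :
  (#|[pred x | P x]|%:R : R) = \sum_x (P x)%:R.
Proof.
rewrite -sum1_card natr_sum big_mkcond /=.
by apply: eq_bigr => x _; rewrite inE; case: (P x).
Qed.

Lemma chi_block k l (x a : bvec (k * l)) :
  (-1) ^+ dotb x a = \prod_(i < k) ((-1) ^+ dotb (block x i) (block a i) : R).
Proof. by rewrite dotb_block sign_xor. Qed.

Lemma sum_chi n (a : bvec n) :
  \sum_(z : bvec n) ((-1) ^+ dotb z a : R) = if a == bzero n then (2 ^ n)%:R else 0.
Proof.
under eq_bigr do rewrite /dotb sign_xor.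
rewrite -(bigA_distr_bigA (fun i b => (-1) ^+ (b && a i) : R)) /=.
case: eqP => [->|/eqP/bzeroPn [i ai]].
  rewrite (eq_bigr (fun _ => 2%:R)); last by move=> i _; rewrite big_bool /= ffunE.
  by rewrite prodr_const card_ord natrX.
by rewrite (bigD1 i) //= big_bool /= ai /= expr1 expr0 addNr mul0r.
Qed.

Lemma sum_by_blocks k l (h : bfun l) (F : bvec k -> R) (G : 'I_k -> bvec l -> R) :
  \sum_(x : bvec (k * l)) F [ffun i => h (block x i)] * \prod_i G i (block x i)
  = \sum_(y : bvec k) F y * \prod_i \sum_(z | h z == y i) G i z.
Proof.
transitivity (\sum_(X : {ffun 'I_k -> bvec l}) F [ffun i => h (X i)] * \prod_i G i (X i)).
  rewrite (reindex (@unblock k l) (onW_bij _ (unblock_bij k l))) /=.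
  apply: eq_bigr => X _; congr (F _ * _).
    by apply/ffunP => i; rewrite !ffunE block_unblock.
  by apply: eq_bigr => i _; rewrite block_unblock.
rewrite (partition_big (fun X : {ffun 'I_k -> bvec l} => [ffun i => h (X i)]) xpredT) //=.
apply: eq_bigr => y _.
rewrite (bigA_distr_big_dep (fun i z => h z == y i) (fun i z => G i z)) big_distrr /=.
apply: eq_big => [X|X /eqP <-] //.
apply/eqP/familyP => [<- i|H]; first by rewrite -topredE /= ffunE.
by apply/ffunP => i; rewrite ffunE; apply/eqP; have := H i; rewrite -topredE.
Qed.

End Characters.

Section WalshComposition.
Variable R : realType.

Lemma pow2_neq0 n : ((2 ^ n)%:R : R) != 0.
Proof. by rewrite pnatr_eq0 expn_eq0. Qed.

Lemma walshE n (f : bfun n) a :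
  \sum_x ((-1) ^+ (f x (+) dotb x a) : R) = (2 ^ n)%:R * walsh R f a.
Proof. by rewrite /walsh mulrA natrX mulfV ?mul1r // -natrX pow2_neq0. Qed.

(* A balanced function has W_f(0) = 0; this is the form of balancedness used
   throughout. *)
Lemma walsh_balanced n (g : bfun n) : balanced g -> walsh R g (bzero n) = 0.
Proof.
rewrite /balanced /walsh => bal.
have -> : \sum_x ((-1) ^+ (g x (+) dotb x (bzero n)) : R) = \sum_x (1 - (g x)%:R *+ 2).
  by apply: eq_bigr => x _; rewrite dotb0 addbF; case: (g x); rewrite /= ?expr1 ?expr0; lra.
have /(congr1 (GRing.natmul (1 : R))) := bal; rewrite natrM mulr_natl => balR.
by rewrite sumrB sumr_const card_bvec sumrMnl -card_sumR balR subrr mulr0.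
Qed.

Definition wcoef n (h : bfun n) (b : bvec n) : R :=
  if b == bzero n then 1 else walsh R h b.

Lemma sum_fiber n (h : bfun n) (hb : walsh R h (bzero n) = 0) (b : bool) (a : bvec n) :
  \sum_(z | h z == b) ((-1) ^+ dotb z a : R) =
    (2 ^ n)%:R / 2 * ((-1) ^+ (b && (a != bzero n)) * wcoef h a).
Proof.
have indicator z : ((h z == b)%:R : R) = (1 + (-1) ^+ b * (-1) ^+ h z) / 2.
  by case: (h z); case: b; rewrite /= ?expr0 ?expr1; field.
rewrite big_mkcond /=.
transitivity (\sum_z (((-1) ^+ dotb z a + (-1) ^+ b * (-1) ^+ (h z (+) dotb z a)) / 2 : R)).
  apply: eq_bigr => z _; rewrite signr_addb mulrA -[X in X + _]mul1r -mulrDl.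
  by rewrite mulrAC -indicator; case: (h z == b); rewrite ?mul1r ?mul0r.
rewrite -mulr_suml big_split /= -mulr_sumr walshE sum_chi /wcoef.
case: eqP => [->|_] /=; rewrite ?andbF ?andbT.
  by rewrite hb !mulr0 addr0 expr0 !mulr1 mulrC.
by rewrite add0r; ring.
Qed.

Lemma walsh_dcomp k l (f : bfun k) (h : bfun l) (hb : walsh R h (bzero l) = 0)
    (a : bvec (k * l)) :
  walsh R (Defs.dcomp f h) a =
    walsh R f [ffun i => block a i != bzero l] * \prod_i wcoef h (block a i).
Proof.
set s := [ffun i => block a i != bzero l].
have chi_s (y : bvec k) :
    \prod_i ((-1) ^+ (y i && (block a i != bzero l)) : R) = (-1) ^+ dotb y s.
  by rewrite /dotb sign_xor; apply: eq_bigr => i _; rewrite ffunE.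
apply: (mulfI (pow2_neq0 (k * l))); rewrite -walshE.
transitivity (\sum_(x : bvec (k * l)) ((-1) ^+ f [ffun i => h (block x i)] : R) *
    \prod_i ((-1) ^+ dotb (block x i) (block a i) : R)).
  by apply: eq_bigr => x _; rewrite signr_addb chi_block.
rewrite (sum_by_blocks h (fun y => (-1) ^+ f y) (fun i z => (-1) ^+ dotb z (block a i))).
transitivity (\sum_y ((2 ^ l)%:R / 2) ^+ k * \prod_i wcoef h (block a i) *
    ((-1) ^+ (f y (+) dotb y s) : R)).
  apply: eq_bigr => y _; rewrite (eq_bigr _ (fun i _ => sum_fiber hb (y i) (block a i))).
  by rewrite big_split /= prodr_const card_ord big_split /= chi_s signr_addb; ring.
have -> : ((2 ^ (k * l))%:R : R) = ((2 ^ l)%:R / 2) ^+ k * (2 ^ k)%:R.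
  by rewrite [X in _ = _ * X]natrX -exprMn divfK ?pnatr_eq0 // -natrX -expnM mulnC.
by rewrite -mulr_sumr walshE; ring.
Qed.

Lemma dcomp_balanced k l (f : bfun k) (h : bfun l) :
  walsh R f (bzero k) = 0 -> walsh R h (bzero l) = 0 ->
  walsh R (Defs.dcomp f h) (bzero (k * l)) = 0.
Proof.
move=> fb hb; rewrite walsh_dcomp //.
have -> : [ffun i => block (bzero (k * l)) i != bzero l] = bzero k.
  apply/ffunP => i; rewrite !ffunE; apply/negbTE; rewrite negbK.
  by apply/eqP/ffunP => j; rewrite !ffunE.
by rewrite fb mul0r.
Qed.

(* |W_f(a)| <= 1, as W_f(a) is an average of signs. *)
Lemma walsh_sq_le1 n (f : bfun n) a : walsh R f a ^+ 2 <= 1.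
Proof.
have : `|walsh R f a| <= 1.
  rewrite /walsh normrM ger0_norm ?natrX ?invr_ge0 ?exprn_ge0 //.
  rewrite ler_pdivrMl ?exprn_gt0 ?ltr0n // mulr1 -natrX.
  apply: le_trans (ler_norm_sum _ _ _) _.
  by under eq_bigr do rewrite normr_sign; rewrite sumr_const card_bvec.
by rewrite ler_norml => /andP[lb ub]; nra.
Qed.

Lemma wcoef_sq_le1 n (h : bfun n) b : 0 <= wcoef h b ^+ 2 <= 1.
Proof.
rewrite sqr_ge0 /wcoef; case: eqP => _ /=; first by rewrite expr1n.
exact: walsh_sq_le1.
Qed.

Section MaxSpectrum.
Variables (k l : nat) (f : bfun k) (h : bfun l) (beta : bvec k) (alpha : bvec l).
Hypotheses (fb : walsh R f (bzero k) = 0) (hb : walsh R h (bzero l) = 0).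
Hypothesis fmax : forall v, walsh R f v ^+ 2 <= walsh R f beta ^+ 2.
Hypothesis hmax : forall v, walsh R h v ^+ 2 <= walsh R h alpha ^+ 2.

(* Every Walsh square of f <> h is bounded by the product of the maxima: the
   nonzero blocks contribute factors <= 1, and at least one is bounded by the
   maximum of W_h^2. *)
Lemma dcomp_walsh_ub a :
  walsh R (Defs.dcomp f h) a ^+ 2 <= walsh R f beta ^+ 2 * walsh R h alpha ^+ 2.
Proof.
rewrite walsh_dcomp // exprMn -prodrXl.
set s := [ffun i => block a i != bzero l].
have [->|/bzeroPn [i0 si0]] := eqVneq s (bzero k).
  by rewrite fb expr0n /= mul0r mulr_ge0 ?sqr_ge0.
apply: ler_pM; rewrite ?sqr_ge0 ?prodr_ge0 //; first by move=> i _; rewrite sqr_ge0.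
rewrite (bigD1 i0) //= -[X in _ <= X]mulr1.
apply: ler_pM; rewrite ?sqr_ge0 ?prodr_ge0 //; first by move=> i _; rewrite sqr_ge0.
  by move: si0; rewrite /wcoef ffunE => /negbTE ->.
by apply: prodr_ile1 => i _; exact: wcoef_sq_le1.
Qed.

(* If beta has weight one, the bound is attained: put alpha in the block
   selected by beta and zeros elsewhere. *)
Lemma dcomp_walsh_max : wt beta = 1%N ->
  exists a, (forall v, walsh R (Defs.dcomp f h) v ^+ 2 <= walsh R (Defs.dcomp f h) a ^+ 2)
    /\ walsh R (Defs.dcomp f h) a ^+ 2 = walsh R f beta ^+ 2 * walsh R h alpha ^+ 2.
Proof.
move=> wtb.
have [P0|Pn0] := eqVneq (walsh R f beta ^+ 2 * walsh R h alpha ^+ 2) 0.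
  exists (bzero (k * l)); rewrite dcomp_balanced // expr2 mulr0.
  by split => [v|]; rewrite ?P0 // -P0 dcomp_walsh_ub.
have alpha0 : alpha != bzero l.
  by apply: contraNneq Pn0 => ->; rewrite hb expr0n /= mulr0.
have /card1P [ib Hib] : #|[pred i | beta i]| == 1%N by rewrite -/(wt beta) wtb.
have betaE i : beta i = (i == ib) by have := Hib i; rewrite !inE.
pose a := unblock [ffun i => if i == ib then alpha else bzero l].
suff aE : walsh R (Defs.dcomp f h) a ^+ 2 = walsh R f beta ^+ 2 * walsh R h alpha ^+ 2.
  by exists a; split => // v; rewrite aE dcomp_walsh_ub.
rewrite walsh_dcomp //.
have -> : [ffun i => block a i != bzero l] = beta.
  apply/ffunP => i; rewrite ffunE block_unblock ffunE betaE.
  by case: (i == ib); rewrite ?alpha0 ?eqxx.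
rewrite (bigD1 ib) //= big1 => [|i /negbTE ni]; last first.
  by rewrite block_unblock ffunE ni /wcoef eqxx.
by rewrite block_unblock ffunE eqxx /wcoef (negbTE alpha0) mulr1 exprMn.
Qed.

End MaxSpectrum.

End WalshComposition.

Section Influence.
Variable R : realType.

Definition infl n (f : bfun n) (i : 'I_n) : R :=
  #|[pred x : bvec n | f x != f (flip x i)]|%:R / (2 ^ n)%:R.

Lemma InfE n (f : bfun n) : Inf R f = \sum_i infl f i.
Proof. by []. Qed.

Lemma sens_dcomp k l (f : bfun k) (h : bfun l) (x : bvec (k * l)) i j :
  (Defs.dcomp f h x != Defs.dcomp f h (flip x (blk i j))) =
  (h (block x i) != h (flip (block x i) j)) &&
  (f [ffun i' => h (block x i')] != f (flip [ffun i' => h (block x i')] i)).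
Proof.
rewrite /Defs.dcomp.
have [E|NE] /= := eqVneq (h (block x i)) (h (flip (block x i) j)).
  apply/negbTE; rewrite negbK; apply/eqP; congr f.
  by apply/ffunP => i'; rewrite !ffunE block_flip; case: eqP => // ->; rewrite E.
congr (_ != f _); apply/ffunP => i'; rewrite !ffunE block_flip.
by case: eqP => // ->; move: NE; case: (h (block x i)); case: (h _).
Qed.

Lemma fiber_card n (h : bfun n) (hb : walsh R h (bzero n) = 0) b :
  \sum_(z | h z == b) (1 : R) = (2 ^ n)%:R / 2.
Proof.
have := sum_fiber hb b (bzero n); rewrite eqxx andbF expr0 mul1r /wcoef eqxx mulr1 => <-.
by apply: eq_bigr => z _; rewrite dotb0 expr0.
Qed.

Lemma sum_flip_average k (F : bvec k -> R) (N : bool -> R) i :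
  (forall y, F (flip y i) = F y) ->
  \sum_y F y * N (y i) = (N false + N true) / 2 * \sum_y F y.
Proof.
move=> Fflip.
have sym : \sum_y F y * N (y i) = \sum_y F y * N (~~ y i).
  rewrite (reindex_inj (@flip_inj k i)) /=.
  by apply: eq_bigr => y _; rewrite Fflip ffunE eqxx.
have both (y : bvec k) : N (y i) + N (~~ y i) = N false + N true.
  by case: (y i); rewrite // addrC.
have -> : \sum_y F y * N (y i) = (\sum_y F y * N (y i) + \sum_y F y * N (~~ y i)) / 2.
  by rewrite -sym; field.
rewrite -big_split /= mulr_suml mulr_sumr.
by apply: eq_bigr => y _; rewrite -mulrDr both; ring.
Qed.

Lemma sens_count k l (f : bfun k) (h : bfun l) (hb : walsh R h (bzero l) = 0) i j :
  (#|[pred x | Defs.dcomp f h x != Defs.dcomp f h (flip x (blk i j))]|%:R : R)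
  = #|[pred y | f y != f (flip y i)]|%:R * #|[pred z | h z != h (flip z j)]|%:R / 2
    * ((2 ^ l)%:R / 2) ^+ k.-1.
Proof.
pose F (y : bvec k) : R := (f y != f (flip y i))%:R.
pose G (i' : 'I_k) (z : bvec l) : R := if i' == i then (h z != h (flip z j))%:R else 1.
pose N b := \sum_(z | h z == b) ((h z != h (flip z j))%:R : R).
have NS : N false + N true = #|[pred z | h z != h (flip z j)]|%:R.
  rewrite card_sumR (bigID (fun z => h z == false)) /=.
  by congr (_ + _); apply: eq_bigl => z; case: (h z).
rewrite card_sumR.
transitivity (\sum_x F [ffun i' => h (block x i')] * \prod_i' G i' (block x i')).
  apply: eq_bigr => x _; rewrite sens_dcomp (bigD1 i) //= /G eqxx big1 => [|i' /negbTE -> //].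
  by rewrite mulr1 /F mulrC; case: (_ != _); case: (_ != _); rewrite ?mul1r ?mul0r.
rewrite sum_by_blocks.
transitivity (\sum_y F y * N (y i) * ((2 ^ l)%:R / 2) ^+ k.-1).
  apply: eq_bigr => y _; rewrite -mulrA; congr (_ * _).
  rewrite (bigD1 i) //= /G eqxx; congr (_ * _).
  rewrite (eq_bigr (fun _ => (2 ^ l)%:R / 2)); last first.
    by move=> i' /negbTE ->; exact: fiber_card.
  by rewrite prodr_const cardC1 card_ord.
rewrite -mulr_suml sum_flip_average => [|y]; last by rewrite /F flipK eq_sym.
by rewrite NS (@card_sumR R _ (fun y => f y != f (flip y i))) /F; ring.
Qed.

Lemma infl_dcomp k l (f : bfun k) (h : bfun l) (hb : walsh R h (bzero l) = 0) i j :
  infl (Defs.dcomp f h) (blk i j) = infl f i * infl h j.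
Proof.
rewrite /infl sens_count //.
case: k f i => [|k] f i /=; first by case: i.
have -> : ((2 ^ (k.+1 * l))%:R : R) = (2 ^ l)%:R ^+ k.+1 by rewrite -natrX -expnM mulnC.
rewrite !natrX !exprS.
have t0 : (2 : R) ^+ l != 0 by rewrite expf_neq0 // pnatr_eq0.
have t1 : (2 : R) ^+ k != 0 by rewrite expf_neq0 // pnatr_eq0.
have t2 : ((2 : R) ^+ l) ^+ k != 0 by rewrite expf_neq0.
by rewrite expr_div_n; field; rewrite t0 t1 t2.
Qed.

Lemma Inf_dcomp k l (f : bfun k) (h : bfun l) (hb : walsh R h (bzero l) = 0) :
  Inf R (Defs.dcomp f h) = Inf R f * Inf R h.
Proof.
rewrite !InfE (reindex _ (onW_bij _ (blk_bij k l))) /= mulr_suml.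
rewrite -(pair_big xpredT xpredT (fun i j => infl (Defs.dcomp f h) (blk i j))) /=.
by apply: eq_bigr => i _; rewrite mulr_sumr; apply: eq_bigr => j _; rewrite infl_dcomp.
Qed.

End Influence.

Section MinEntropy.
Variable R : realType.

(* log(1/M) for a maximal squared Walsh coefficient M, and 0 if M = 0
   (then no coefficient is nonzero and the defining minimum is empty). *)
Definition entropy_of (M : R) : R := if M == 0 then 0 else log2 (1 / M).

Lemma Hinf_max n (f : bfun n) a0 :
  (forall a, walsh R f a ^+ 2 <= walsh R f a0 ^+ 2) ->
  Hinf R f = entropy_of (walsh R f a0 ^+ 2).
Proof.
rewrite /Hinf /entropy_of => fmax; have [M0|M0] := eqVneq (walsh R f a0 ^+ 2) 0.
  rewrite big_pred0 // => a; apply/negbTE; rewrite negbK eq_le sqr_ge0 andbT.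
  by rewrite -M0 fmax.
suff -> : \big[Order.min/+oo%E]_(a | walsh R f a ^+ 2 != 0)
    (log2 (1 / walsh R f a ^+ 2))%:E = (log2 (1 / walsh R f a0 ^+ 2))%:E by [].
apply/eqP; rewrite eq_le; apply/andP; split.
  exact: (bigmin_le_cond _ (P := fun a => walsh R f a ^+ 2 != 0)).
apply/bigmin_geP; split; first exact: leey.
move=> a Ha; have ln2_gt0 : 0 < ln (2 : R) by apply: ln_gt0; rewrite ltr1n.
rewrite lee_fin /log2 ler_pM2r ?invr_gt0 //.
have Wpos : 0 < walsh R f a ^+ 2 by rewrite lt0r Ha sqr_ge0.
have Mpos : 0 < walsh R f a0 ^+ 2 by rewrite lt0r M0 sqr_ge0.
by rewrite ler_ln ?posrE ?div1r ?invr_gt0 // lef_pV2 ?posrE.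
Qed.

Lemma entropy_of_exp (M : R) n : 0 <= M -> entropy_of (M ^+ n) = n%:R * entropy_of M.
Proof.
rewrite /entropy_of => M0; have [->|Mn0] := eqVneq M 0.
  by case: n => [|n]; rewrite ?expr0n ?eqxx ?mulr0 //= oner_eq0 /log2 div1r invr1 ln1 mul0r.
have Mp : 0 < 1 / M by rewrite div1r invr_gt0 lt0r Mn0 M0.
have -> : 1 / M ^+ n = (1 / M) ^+ n by rewrite expr_div_n expr1n.
rewrite expf_eq0 (negbTE Mn0) andbF /log2.
by rewrite lnXn // -(mulr_natl (ln (1 / M))) mulrA.
Qed.

End MinEntropy.

Section Iteration.
Variables (R : realType) (l : nat) (g : bfun l) (beta : bvec l).
Hypothesis gb : walsh R g (bzero l) = 0.
Hypothesis wtb : wt beta = 1%N.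
Hypothesis gmax : forall v, walsh R g v ^+ 2 <= walsh R g beta ^+ 2.

Lemma fiter_balanced m : walsh R (fiter g m) (bzero (nv l m)) = 0.
Proof. by elim: m => [|m IH] //=; apply: dcomp_balanced. Qed.

Lemma fiter_walsh_max m : exists a,
  (forall v, walsh R (fiter g m) v ^+ 2 <= walsh R (fiter g m) a ^+ 2) /\
  walsh R (fiter g m) a ^+ 2 = (walsh R g beta ^+ 2) ^+ m.+1.
Proof.
elim: m => [|m [a [amax aE]]]; first by exists beta; rewrite expr1.
have [a' [a'max a'E]] := dcomp_walsh_max gb (fiter_balanced m) gmax amax wtb.
by exists a'; split => //; rewrite /= a'E aE exprS.
Qed.

Lemma Hinf_fiter m : Hinf R (fiter g m) = m.+1%:R * Hinf R g.
Proof.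
have [a [amax aE]] := fiter_walsh_max m.
by rewrite (Hinf_max amax) (Hinf_max gmax) aE entropy_of_exp ?sqr_ge0.
Qed.

Lemma Inf_fiter m : Inf R (fiter g m) = Inf R g ^+ m.+1.
Proof.
elim: m => [|m IH]; first by rewrite expr1.
by rewrite /= Inf_dcomp ?IH ?exprS //; exact: fiter_balanced.
Qed.

End Iteration.

Theorem theorem5 (R : realType) (l : nat) (g : bfun l) :
  balanced g ->
  (exists beta : bvec l, wt beta = 1%N /\
     forall v : bvec l, walsh R g v ^+ 2 <= walsh R g beta ^+ 2) ->
  forall m : nat,
    Hinf R (fiter g m) = m.+1%:R * Hinf R g /\
    Hinf R (fiter g m) / Inf R (fiter g m) =
      Hinf R g / Inf R g * (m.+1%:R / Inf R g ^+ m).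
Proof.
move=> /(walsh_balanced R) gb [beta [wtb gmax]] m.
have HE := Hinf_fiter gb wtb gmax m.
by split=> //; rewrite HE (Inf_fiter gb) exprS invfM; ring.
Qed.
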